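(* Let $\Omega$ be a finite set, let $G \leq \mathrm{Sym}(\Omega)$ be semiprimitive and let $\Sigma$ be a non-trivial $G$-invariant partition of $\Omega$. Then (i) $D(G) \leq D(G^\Sigma)$; (ii) if $|\sigma| \geq |\Sigma|-1$ for all $\sigma \in \Sigma$, then $D(G)=2$.
   Context: For $G \leq \mathrm{Sym}(\Omega)$, the distinguishing number $D(G)$ is the least positive integer $k$ such that there is a partition of $\Omega$ into $k$ parts for which only the identity of $G$ stabilises every part setwise. A permutation group is semiprimitive if every normal subgroup is transitive or semiregular (semiregular: all point stabilisers trivial). A $G$-invariant partition $\Sigma$ is non-trivial if it has more than one part and not all parts are singletons; $G^\Sigma$ denotes the permutation group induced by $G$ on the set of parts $\Sigma$. *)

From mathcomp Require Import all_boot all_fingroup.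
Set Implicit Arguments. Unset Strict Implicit. Unset Printing Implicit Defensive.
Local Open Scope group_scope.

Section Defs.
Variable T : finType.

Definition dist_partition (G : {set {perm T}}) (k : nat) : Prop :=
  exists P : {set {set T}},
    [/\ partition P [set: T], #|P| = k &
        forall g, g \in G -> (forall B, B \in P -> g @: B = B) -> g = 1].

Definition is_dist_number (G : {set {perm T}}) (d : nat) : Prop :=
  [/\ 0 < d, dist_partition G d &
      forall k, 0 < k -> dist_partition G k -> d <= k].

(* Distinguishing partitions for the induced group G^Sigma on the set of parts
   Sigma: a partition Q of Sigma into exactly k parts such that the only
   element of G^Sigma fixing every part of Q setwise is the identity of
   G^Sigma, i.e. every g in G stabilising every part of Q acts trivially
   on Sigma. *)
Definition dist_partition_induced (G : {set {perm T}}) (Sigma : {set {set T}})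
    (k : nat) : Prop :=
  exists Q : {set {set {set T}}},
    [/\ partition Q Sigma, #|Q| = k &
        forall g, g \in G ->
          (forall C, C \in Q -> [set g @: B | B : {set T} in C] = C) ->
          forall B, B \in Sigma -> g @: B = B].

Definition is_dist_number_induced (G : {set {perm T}}) (Sigma : {set {set T}})
    (d : nat) : Prop :=
  [/\ 0 < d, dist_partition_induced G Sigma d &
      forall k, 0 < k -> dist_partition_induced G Sigma k -> d <= k].

Definition semiregular (N : {set {perm T}}) : Prop :=
  forall x : T, forall n, n \in N -> n x = x -> n = 1.

Definition semiprimitive (G : {group {perm T}}) : Prop :=
  [transitive G, on [set: T] | 'P] /\
  forall N : {group {perm T}}, N <| G ->
    [transitive N, on [set: T] | 'P] \/ semiregular N.

Definition invariant_partition (G : {set {perm T}}) (Sigma : {set {set T}}) :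
    Prop :=
  partition Sigma [set: T] /\
  forall g B, g \in G -> B \in Sigma -> g @: B \in Sigma.

Definition nontrivial_partition (Sigma : {set {set T}}) : Prop :=
  1 < #|Sigma| /\ exists2 B, B \in Sigma & 1 < #|B|.

End Defs.

(* The kernel of the action of G on the blocks is a normal
   subgroup of G which fixes each of the (at least two) blocks, so it is not
   transitive; semiprimitivity makes it semiregular.  Hence an element of G
   that fixes every block and one point is trivial.
   (i) Label every point by the part, in a distinguishing partition of Sigma
   with k >= 2 parts, of its block, except that one point x of a block with
   two or more points gets a different part.  An element preserving these
   labels fixes x (otherwise the image of the block of x would carry both
   the label of x and that of the other points of its block), hence it
   preserves the labels of all blocks, fixes every block and is trivial.
   (ii) List the blocks as B_0, ..., B_(m-1) and colour i points of B_i,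
   which is possible since |B_i| >= m - 1.  A colour-preserving element
   keeps the number of coloured points of each block, so it fixes every
   block and the unique coloured point of B_1. *)

From Stdlib Require Import Classical Wf_nat.
From mathcomp Require Import all_boot all_fingroup.
Set Implicit Arguments. Unset Strict Implicit. Unset Printing Implicit Defensive.
Local Open Scope group_scope.

Lemma ex_minn_prop (P : nat -> Prop) :
  (exists n, P n) -> exists2 m, P m & forall k, P k -> m <= k.
Proof.
move=> exP.
have [m [[Pm min_m] _]] :=
  dec_inh_nat_subset_has_unique_least_element P (fun n => classic (P n)) exP.
by exists m => // k /min_m/leP.
Qed.

Lemma imset_stable_eq (aT : finType) (f : aT -> aT) (A : {set aT}) :
  injective f -> {in A, forall x, f x \in A} -> f @: A = A.
Proof.
move=> inj_f fA; apply/eqP; rewrite eqEcard card_imset // leqnn andbT.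
by apply/subsetP => _ /imsetP[x Ax ->]; apply: fA.
Qed.

Lemma partition_set1 (aT : finType) (A : {set aT}) :
  partition [set [set x] | x in A] A.
Proof.
apply/and3P; split.
- rewrite cover_imset; apply/eqP/setP => x.
  apply/bigcupP/idP => [[y Ay /set1P -> //] | Ax].
  by exists x; rewrite ?set11.
- apply/trivIsetP => _ _ /imsetP[x _ ->] /imsetP[y _ ->] neq_xy.
  by rewrite disjoints1 inE; apply: contraNneq neq_xy => ->.
- apply/imsetP => -[x _ /setP/(_ x)]; by rewrite !inE eqxx.
Qed.

Lemma im_pblock (aT : finType) (P : {set {set aT}}) (D : {set aT}) :
  partition P D -> pblock P @: D = P.
Proof.
move=> partP; have covP := cover_partition partP.
apply/setP => B; apply/imsetP/idP => [[x Dx ->] | PB].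
  by rewrite pblock_mem // covP.
have /set0Pn[x Bx] := partition_neq0 partP PB.
exists x; last by rewrite (def_pblock (partition_trivIset partP) PB Bx).
by rewrite -covP; apply/bigcupP; exists B.
Qed.

Lemma dist_partition_induced_discrete (T : finType) (G : {set {perm T}})
    (Sigma : {set {set T}}) :
  dist_partition_induced G Sigma #|Sigma|.
Proof.
exists [set [set B] | B in Sigma]; split.
- exact: partition_set1.
- exact/card_imset/set1_inj.
- move=> g _ fixQ B SB.
  by have := fixQ _ (imset_f _ SB); rewrite imset_set1 => /set1_inj.
Qed.

Lemma imset_colour (T : finType) (c : T -> bool) (g : {perm T}) (B : {set T}) :
  (forall t, c (g t) = c t) ->
  g @: [set t in B | c t] = [set t in g @: B | c t].
Proof.
move=> fix_c; apply/setP => u; apply/imsetP/idP => [[t] | ].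
  by rewrite inE => /andP[Bt ct] ->; rewrite inE imset_f // fix_c.
rewrite inE => /andP[/imsetP[t Bt ->] cgt].
by exists t; rewrite // inE Bt -fix_c.
Qed.

Section Labelling.
Variables (T : finType) (G : {set {perm T}}).

Lemma dist_partition_label (L : finType) (l : T -> L) :
  (forall g, g \in G -> (forall t, l (g t) = l t) -> g = 1) ->
  dist_partition G #|l @: [set: T]|.
Proof.
move=> l_dist; pose fibre v := [set t | l t == v].
have fibresE : preim_partition l [set: T] = fibre @: (l @: [set: T]).
  rewrite -imset_comp; apply: eq_imset => t; apply/setP => u.
  by rewrite !inE eq_sym.
exists (preim_partition l [set: T]); split.
- exact: preim_partitionP.
- rewrite fibresE; apply: card_in_imset => _ w /imsetP[t _ ->] _ eq_fibre.
  have : t \in fibre (l t) by rewrite inE.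
  by rewrite eq_fibre inE => /eqP.
- move=> g gG fix_fibres; apply: l_dist => // t.
  have /fix_fibres eq_fibre : fibre (l t) \in preim_partition l [set: T].
    by rewrite fibresE; apply/imset_f/imset_f.
  have : g t \in g @: fibre (l t) by apply: imset_f; rewrite inE.
  by rewrite eq_fibre inE => /eqP.
Qed.

End Labelling.

Lemma transitive_not_dist_partition1 (T : finType) (G : {group {perm T}}) :
  [transitive G, on [set: T] | 'P] -> 1 < #|T| -> ~ dist_partition G 1.
Proof.
move=> trG /card_gt1P[x [y [_ _ neq_xy]]].
case=> P [partP /eqP/cards1P[A defP] distP].
have defA : A = [set: T] by rewrite -(cover_partition partP) defP cover1.
have /orbitP[g gG gx] : y \in orbit 'P G x by rewrite (atransP trG) ?inE.
suff g1 : g = 1 by move: neq_xy; rewrite -gx g1 act1 eqxx.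
apply: distP => // B; rewrite defP defA => /set1P ->.
by apply: im_perm_on; apply/subsetP => t; rewrite inE.
Qed.

Section Blocks.
Variables (T : finType) (Sigma : {set {set T}}).
Hypothesis partS : partition Sigma [set: T].

Lemma pblock_memT t : pblock Sigma t \in Sigma.
Proof. by rewrite pblock_mem // (cover_partition partS). Qed.

Lemma mem_pblockT t : t \in pblock Sigma t.
Proof. by rewrite mem_pblock (cover_partition partS). Qed.

Lemma def_pblockT B t : B \in Sigma -> t \in B -> pblock Sigma t = B.
Proof. exact/def_pblock/partition_trivIset/partS. Qed.

Lemma exists_block_point B : B \in Sigma -> exists t, t \in B.
Proof. by move/(partition_neq0 partS)/set0Pn. Qed.

Lemma blockwise_not_transitive (H : {group {perm T}}) :
  1 < #|Sigma| -> (forall h B, h \in H -> B \in Sigma -> h @: B = B) ->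
  ~ [transitive H, on [set: T] | 'P].
Proof.
move=> /card_gt1P[B1 [B2 [SB1 SB2 neqB]]] fixH trH.
have [[x B1x] [y B2y]] := (exists_block_point SB1, exists_block_point SB2).
have /orbitP[h hH hx] : y \in orbit 'P H x by rewrite (atransP trH) ?inE.
have B1y : y \in B1 by rewrite -(fixH h B1) // -hx; apply: imset_f.
by move: neqB; rewrite -(def_pblockT SB1 B1y) (def_pblockT SB2 B2y) eqxx.
Qed.

Lemma exists_colouring (n : {set T} -> nat) :
  {in Sigma, forall B, n B <= #|B|} ->
  exists c : T -> bool,
    {in Sigma, forall B : {set T}, #|[set t in B | c t]| = n B}.
Proof.
move=> le_n.
exists (fun t => index t (enum (pblock Sigma t)) < n (pblock Sigma t)) => B SB.
have -> : [set t in B | index t (enum (pblock Sigma t)) < n (pblock Sigma t)]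
          = [set t in take (n B) (enum B)].
  apply/setP => t; rewrite !inE; have [Bt | nBt] /= := boolP (t \in B).
    by rewrite (def_pblockT SB Bt) in_take ?mem_enum.
  by apply/esym/negP => /mem_take; rewrite mem_enum (negbTE nBt).
rewrite cardsE (card_uniqP _) ?take_uniq ?enum_uniq //.
by rewrite size_takel // -cardE le_n.
Qed.

Section Relabelling.
Variables (L : finType) (lam : {set T} -> L) (x : T) (c : L).

Definition relabel t := if t == x then c else lam (pblock Sigma t).

Lemma relabel_neq t : t != x -> relabel t = lam (pblock Sigma t).
Proof. by rewrite /relabel => /negbTE ->. Qed.

Lemma relabel_image :
  (exists2 y, y \in pblock Sigma x & y != x) ->
  relabel @: [set: T] = c |: [set lam B | B in Sigma].
Proof.
move=> [y xy neq_yx]; apply/setP => v; rewrite !inE.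
apply/imsetP/orP => [[t _ ->] | [/eqP -> | /imsetP[B SB ->]]].
- rewrite /relabel; case: ifP => _; first by left.
  by right; apply: imset_f; apply: pblock_memT.
- by exists x; rewrite /relabel ?eqxx.
have [t Bt neq_tx] : exists2 t, t \in B & t != x.
  have [Bx | nBx] := boolP (x \in B).
    by exists y; rewrite // -(def_pblockT SB Bx).
  have [t Bt] := exists_block_point SB.
  by exists t => //; apply: contraNneq nBx => <-.
by exists t; rewrite // relabel_neq // (def_pblockT SB Bt).
Qed.

Lemma relabel_preserves_label (g : {perm T}) :
  (forall t, relabel (g t) = relabel t) -> g x = x ->
  forall t, lam (pblock Sigma (g t)) = lam (pblock Sigma t).
Proof.
move=> fix_l gx t; have [-> | neq_tx] := eqVneq t x; first by rewrite gx.
have neq_gt : g t != x.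
  by apply: contra_neq neq_tx => gt; apply: (@perm_inj _ g); rewrite gt gx.
by rewrite -!relabel_neq // fix_l.
Qed.

End Relabelling.

End Blocks.

Section InvariantPartition.
Variables (T : finType) (G : {group {perm T}}) (Sigma : {set {set T}}).
Hypothesis invS : invariant_partition G Sigma.

Let partS : partition Sigma [set: T] := proj1 invS.
Let imset_block g B : g \in G -> B \in Sigma -> g @: B \in Sigma :=
  proj2 invS g B.

Lemma imset_pblock g t : g \in G -> g @: pblock Sigma t = pblock Sigma (g t).
Proof.
move=> gG; apply/esym/def_pblockT; rewrite ?imset_block ?pblock_memT //.
exact/imset_f/mem_pblockT.
Qed.

Lemma block_kernel_normal : G :&: 'C(Sigma | 'P^*) <| G.
Proof.
apply/norm_normalI/(subset_trans _ (astab_norm _ _))/subsetP => g gG.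
rewrite !inE; apply/subsetP => B SB; rewrite inE /= setactE.
exact: imset_block.
Qed.

Lemma relabel_fixes_point (L : finType) (lam : {set T} -> L) x c g y :
  g \in G -> y \in pblock Sigma x -> y != x -> c != lam (pblock Sigma x) ->
  (forall t, relabel Sigma lam x c (g t) = relabel Sigma lam x c t) -> g x = x.
Proof.
move=> gG xy neq_yx neq_c fix_l; case: (eqVneq (g x) x) => // neq_gx.
case/negP: neq_c.
have pblock_y : pblock Sigma y = pblock Sigma x :=
  def_pblockT partS (pblock_memT partS x) xy.
have -> : c = relabel Sigma lam x c x by rewrite /relabel eqxx.
have -> : lam (pblock Sigma x) = relabel Sigma lam x c y.
  by rewrite relabel_neq // pblock_y.
apply/eqP; have [gy_x | neq_gy] := eqVneq (g y) x.
  by rewrite -(fix_l y) gy_x.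
rewrite -fix_l -[relabel _ _ _ _ y]fix_l !relabel_neq //.
by rewrite -!imset_pblock // pblock_y.
Qed.

Lemma pblock_label_stable (Q : {set {set {set T}}}) g :
  partition Q Sigma -> g \in G ->
  (forall t, pblock Q (pblock Sigma (g t)) = pblock Q (pblock Sigma t)) ->
  forall C, C \in Q -> [set g @: B | B : {set T} in C] = C.
Proof.
move=> partQ gG fix_lab C QC; have covQ := cover_partition partQ.
apply: imset_stable_eq (imset_inj perm_inj) _ => B CB.
have SB : B \in Sigma by rewrite -covQ; apply/bigcupP; exists C.
have [t Bt] := exists_block_point partS SB.
have -> : C = pblock Q (pblock Sigma (g t)).
  rewrite fix_lab (def_pblockT partS SB Bt).
  by rewrite (def_pblock (partition_trivIset partQ) QC CB).
rewrite -(def_pblockT partS SB Bt) imset_pblock //.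
by rewrite mem_pblock covQ pblock_memT.
Qed.

Lemma dist_partition_induced_gt1 k :
  [transitive G, on [set: T] | 'P] -> 1 < #|Sigma| ->
  dist_partition_induced G Sigma k -> 1 < k.
Proof.
move=> trG two_blocks [Q [partQ <- distQ]]; have covQ := cover_partition partQ.
have Q_gt0 : 0 < #|Q|.
  rewrite card_gt0; apply: contraTneq two_blocks => Q0.
  by rewrite -covQ Q0 /cover big_set0 cards0.
rewrite ltn_neqAle Q_gt0 andbT eq_sym; apply/negP => /cards1P[C defQ].
have defC : C = Sigma by rewrite -covQ defQ cover1.
apply: (blockwise_not_transitive partS two_blocks _ trG) => g B gG.
apply: (distQ g gG) => C'; rewrite defQ defC => /set1P ->.
by apply: imset_stable_eq (imset_inj perm_inj) _ => B' SB'; apply: imset_block.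
Qed.

Section Semiprimitive.
Hypotheses (semiG : semiprimitive G) (two_blocks : 1 < #|Sigma|).

Lemma block_kernel_semiregular g x :
  g \in G -> (forall B, B \in Sigma -> g @: B = B) -> g x = x -> g = 1.
Proof.
move=> gG fix_g gx.
have fix_kernel h B : h \in G :&: 'C(Sigma | 'P^*) -> B \in Sigma -> h @: B = B.
  by case/setIP => _ /astabP fixB SB; apply: fixB.
case: (proj2 semiG _ block_kernel_normal) => [trK | regK].
  by case: (blockwise_not_transitive partS two_blocks fix_kernel trK).
apply: (regK x) => //; rewrite inE gG; apply/astabP => B SB /=.
by rewrite setactE fix_g.
Qed.

Lemma dist_partition_of_induced B0 k :
  B0 \in Sigma -> 1 < #|B0| -> dist_partition_induced G Sigma k ->
  dist_partition G k.
Proof.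
move=> SB0 /card_gt1P[x [y [B0x B0y neq_xy]]] distk.
have k_gt1 := dist_partition_induced_gt1 (proj1 semiG) two_blocks distk.
case: distk => Q [partQ defk distQ].
have pblock_x : pblock Sigma x = B0 := def_pblockT partS SB0 B0x.
have [C QC neq_C] : exists2 C, C \in Q & C != pblock Q B0.
  move: k_gt1; rewrite -defk => /card_gt1P[C1 [C2 [QC1 QC2 neqC]]].
  have [eqC1 | ] := eqVneq C1 (pblock Q B0); last by exists C1.
  by exists C2; rewrite // -eqC1 eq_sym.
have im_relabel : relabel Sigma (pblock Q) x C @: [set: T] = Q.
  rewrite (relabel_image partS); last by exists y; rewrite ?pblock_x // eq_sym.
  by rewrite im_pblock //; apply/setUidPr; rewrite sub1set.
rewrite -defk -im_relabel; apply: dist_partition_label => g gG fix_l.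
have gx : g x = x.
  by apply: (relabel_fixes_point (y := y) gG _ _ _ fix_l);
    rewrite ?pblock_x // eq_sym.
apply: (block_kernel_semiregular gG _ gx); apply: (distQ g gG).
exact: pblock_label_stable partQ gG (relabel_preserves_label fix_l gx).
Qed.

Lemma colouring_distinguishes (c : T -> bool) (B1 : {set T}) :
  {in Sigma &, injective (fun B : {set T} => #|[set t in B | c t]|)} ->
  B1 \in Sigma -> #|[set t in B1 | c t]| = 1%N ->
  forall g, g \in G -> (forall t, c (g t) = c t) -> g = 1.
Proof.
move=> inj_count SB1 /eqP/cards1P[x1 defB1] g gG fix_c.
have fix_g B : B \in Sigma -> g @: B = B.
  move=> SB; apply: inj_count; rewrite ?imset_block //=.
  by rewrite -imset_colour // card_imset //; apply: perm_inj.
apply: (block_kernel_semiregular gG fix_g (x := x1)).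
have : g x1 \in g @: [set t in B1 | c t] by rewrite defB1 imset_f ?set11.
by rewrite imset_colour // fix_g // defB1 => /set1P.
Qed.

Lemma dist_partition2 :
  {in Sigma, forall B : {set T}, #|Sigma| - 1 <= #|B|} -> dist_partition G 2.
Proof.
move=> big_blocks; pose idx B := index B (enum Sigma).
have idx_lt B : B \in Sigma -> idx B < #|Sigma|.
  by move=> SB; rewrite cardE index_mem mem_enum.
have idx_le : {in Sigma, forall B, idx B <= #|B|}.
  move=> B SB; apply: leq_trans (big_blocks B SB).
  by rewrite subn1 -ltnS prednK ?idx_lt // (leq_ltn_trans _ (idx_lt B SB)).
have block_idx i : i < #|Sigma| -> exists2 B, B \in Sigma & idx B = i.
  move=> lt_i; exists (nth set0 (enum Sigma) i).
    by rewrite -mem_enum mem_nth // -cardE.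
  by rewrite /idx index_uniq ?enum_uniq // -cardE.
have [c count_c] := exists_colouring partS idx_le.
have [B0 SB0 idx0] := block_idx 0 (ltnW two_blocks).
have [B1 SB1 idx1] := block_idx 1%N two_blocks.
have im_c : c @: [set: T] = [set: bool].
  apply/setP => b; rewrite inE; apply/imsetP; case: b.
    have /card_gt0P[x1] : 0 < #|[set t in B1 | c t]| by rewrite count_c ?idx1.
    by rewrite inE => /andP[_ cx1]; exists x1.
  have [t B0t] := exists_block_point partS SB0; exists t => //.
  have /eqP := count_c B0 SB0; rewrite idx0 cards_eq0 => /eqP/setP/(_ t).
  by rewrite !inE B0t /= => ->.
rewrite -card_bool -cardsT -im_c; apply: dist_partition_label.
apply: (colouring_distinguishes (B1 := B1)); rewrite ?count_c ?idx1 //.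
move=> B B' SB SB'; rewrite !count_c // => eq_idx.
by apply: (index_inj set0 _ _ eq_idx); rewrite mem_enum.
Qed.

End Semiprimitive.

End InvariantPartition.

Theorem lemma2p2 (T : finType) (G : {group {perm T}}) (Sigma : {set {set T}}) :
  semiprimitive G -> invariant_partition G Sigma -> nontrivial_partition Sigma ->
  (exists d dS, [/\ is_dist_number G d, is_dist_number_induced G Sigma dS
                   & d <= dS])
  /\
  ((forall sigma, sigma \in Sigma -> #|Sigma| - 1 <= #|sigma|) ->
   is_dist_number G 2).
Proof.
move=> semiG invS [two_blocks [B0 SB0 B0_gt1]]; split.
- have [dS [dS_gt0 distS] min_dS] :=
    ex_minn_prop (P := fun k => 0 < k /\ dist_partition_induced G Sigma k)
      (ex_intro _ _ (conj (ltnW two_blocks)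
                          (dist_partition_induced_discrete G Sigma))).
  have distG := dist_partition_of_induced invS semiG two_blocks SB0 B0_gt1 distS.
  have [d [d_gt0 distd] min_d] :=
    ex_minn_prop (P := fun k => 0 < k /\ dist_partition G k)
      (ex_intro _ _ (conj dS_gt0 distG)).
  exists d, dS; split; last exact: min_d.
  + by split=> // k k_gt0 distk; apply: min_d.
  + by split=> // k k_gt0 distk; apply: min_dS.
- move=> big_blocks; split=> //.
    exact: dist_partition2 invS semiG two_blocks big_blocks.
  have T_gt1 : 1 < #|T| := leq_trans B0_gt1 (max_card _).
  case=> [|[|k]] // _ dist1.
  by case: (transitive_not_dist_partition1 (proj1 semiG) T_gt1 dist1).
Qed.
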